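(* A bijection $\kappa:\mathcal G\to\mathcal G$ is an automorphism of the Grassmann graph $(\mathcal G,\sim)$ (i.e. $X\sim Y\iff X^\kappa\sim Y^\kappa$ for all $X,Y\in\mathcal G$) if and only if it is a collineation of the Grassmann space $(\mathcal G,\mathfrak P)$ (i.e. $\kappa$ and $\kappa^{-1}$ map pencils onto pencils).
   Context: $K$ is a (not necessarily commutative) field and $V$ is a left vector space over $K$ of arbitrary (possibly infinite) dimension with $\dim V>2$. $\mathcal G:=\{X\le V\mid X\cong V/X\}$, assumed nonempty. $X,Y\in\mathcal G$ are adjacent ($X\sim Y$) if $\dim((X+Y)/X)=\dim((X+Y)/Y)=1$. A pencil is a set $\mathcal G[M,N]:=\{X\in\mathcal G\mid M<X<N\}$, where $M,N\le V$ are subspaces such that there exists $X\in\mathcal G$ with $M\le X\le N$ and $\dim(X/M)=\dim(N/X)=1$; $\mathfrak P$ denotes the set of all pencils. *)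

(* K : a (possibly non-commutative) field = unitRingType in
   which every nonzero element is a unit; V : left K-module (lmodType K). *)
From mathcomp Require Import all_boot all_algebra.
Set Implicit Arguments. Unset Strict Implicit. Unset Printing Implicit Defensive.
Import GRing.Theory.
Local Open Scope ring_scope.

Section Grass.
Variables (K : unitRingType) (V : lmodType K).

Definition subspace (S : V -> Prop) : Prop :=
  S 0 /\ forall (a : K) (x y : V), S x -> S y -> S (a *: x + y).

Definition subsp_le (S T : V -> Prop) : Prop := forall x, S x -> T x.

Definition subsp_lt (S T : V -> Prop) : Prop :=
  subsp_le S T /\ exists x, T x /\ ~ S x.

Definition sumsp (X Y : V -> Prop) : V -> Prop :=
  fun w => exists x y, X x /\ Y y /\ w = x + y.

(* dim (Z / X) = 1  (for X <= Z): Z = X + K v with v not in X *)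
Definition codim1 (X Z : V -> Prop) : Prop :=
  exists v, ~ X v /\ forall w, Z w <-> exists (a : K) x, X x /\ w = x + a *: v.

(* X is isomorphic to V/X: there is a K-linear map f : X -> V such that
   x |-> f x + X is a bijection X -> V/X. *)
Definition iso_quot (X : V -> Prop) : Prop :=
  exists f : V -> V,
    (forall (a : K) x y, X x -> X y -> f (a *: x + y) = a *: f x + f y) /\
    (forall x, X x -> X (f x) -> x = 0) /\
    (forall v, exists x, X x /\ X (v - f x)).

Definition inG (X : V -> Prop) : Prop := subspace X /\ iso_quot X.

Definition Gr : Type := {X : V -> Prop | inG X}.

Definition adj (X Y : V -> Prop) : Prop :=
  codim1 X (sumsp X Y) /\ codim1 Y (sumsp X Y).

Definition is_pencil (P : Gr -> Prop) : Prop :=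
  exists M N : V -> Prop, subspace M /\ subspace N /\
    (exists X : Gr, subsp_le M (proj1_sig X) /\ subsp_le (proj1_sig X) N /\
        codim1 M (proj1_sig X) /\ codim1 (proj1_sig X) N) /\
    (forall X : Gr, P X <-> (subsp_lt M (proj1_sig X) /\ subsp_lt (proj1_sig X) N)).

Definition image_set (k : Gr -> Gr) (P : Gr -> Prop) : Gr -> Prop :=
  fun Y => exists X, P X /\ k X = Y.

Definition preimage_set (k : Gr -> Gr) (P : Gr -> Prop) : Gr -> Prop :=
  fun X => P (k X).

Definition dim_gt2 : Prop :=
  exists u v w : V, forall a b c : K,
    a *: u + b *: v + c *: w = 0 -> a = 0 /\ b = 0 /\ c = 0.

End Grass.

(* The pencil through two adjacent points X, Y of the Grassmann graph is
   G[X :&: Y, X + Y], and its points other than X and Y are exactly the common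
   neighbours of X and Y adjacent to every other common neighbour.  Proving the
   converse inclusion needs dim V > 2 and the closure of G under adjacency (a
   linear involution swaps X and Y).  Hence pencils are definable from the
   adjacency relation and graph automorphisms preserve them; conversely two
   distinct points are adjacent iff they lie on a common pencil, which
   collineations preserve. *)

From mathcomp Require Import all_boot all_algebra.
From mathcomp Require classical_sets.
From Stdlib Require Import FunctionalExtensionality PropExtensionality ProofIrrelevance Classical ClassicalEpsilon.
Set Implicit Arguments. Unset Strict Implicit. Unset Printing Implicit Defensive.
Import GRing.Theory.
Local Open Scope ring_scope.

Section Subspaces.
Variables (K : unitRingType) (V : lmodType K).
Implicit Types (S T U X Y M : V -> Prop).

Definition addv S (v : V) : V -> Prop :=
  fun w => exists (a : K) x, S x /\ w = x + a *: v.

Definition capsp S T : V -> Prop := fun w => S w /\ T w.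

Lemma subsp_ext S T : (forall v, S v <-> T v) -> S = T.
Proof.
move=> h; apply: functional_extensionality => v.
exact: propositional_extensionality.
Qed.

Lemma subsp_le_anti S T : subsp_le S T -> subsp_le T S -> S = T.
Proof. by move=> h1 h2; apply: subsp_ext => v; split; [apply: h1|apply: h2]. Qed.

Section OneSubspace.
Variables (S : V -> Prop) (HS : subspace S).

Lemma subspace0 : S 0. Proof. by case: HS. Qed.

Lemma subspaceD x y : S x -> S y -> S (x + y).
Proof. by move=> hx hy; have := (proj2 HS) 1 x y hx hy; rewrite scale1r. Qed.

Lemma subspaceZ a x : S x -> S (a *: x).
Proof. by move=> hx; have := (proj2 HS) a x 0 hx subspace0; rewrite addr0. Qed.

Lemma subspaceB x y : S x -> S y -> S (x - y).
Proof. by move=> hx hy; rewrite -scaleN1r; apply: subspaceD => //; apply: subspaceZ. Qed.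

Lemma addv_subspace v : subspace (addv S v).
Proof.
split; first by exists 0, 0; rewrite scale0r addr0; split=> //; exact: subspace0.
move=> a x y [a1 [x1 [h1 ->]]] [a2 [x2 [h2 ->]]].
exists (a * a1 + a2), (a *: x1 + x2); split; first exact: (proj2 HS).
by rewrite scalerDr scalerA scalerDl addrACA.
Qed.

Lemma le_addv v : subsp_le S (addv S v).
Proof. by move=> x hx; exists 0, x; rewrite scale0r addr0. Qed.

Lemma addv_vec v : addv S v v.
Proof. by exists 1, 0; rewrite scale1r add0r; split=> //; exact: subspace0. Qed.

End OneSubspace.

Lemma addv_le S T v : subspace T -> subsp_le S T -> T v -> subsp_le (addv S v) T.
Proof.
move=> hT hST hv w [a [x [hx ->]]].
by apply: subspaceD => //; [exact: hST|exact: subspaceZ].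
Qed.

Lemma addv_id T v : subspace T -> T v -> addv T v = T.
Proof. by move=> hT hv; apply: subsp_le_anti; [apply: addv_le|apply: le_addv]. Qed.

Lemma addvAC M p q : addv (addv M p) q = addv (addv M q) p.
Proof.
apply: subsp_ext => w; split=> -[a [x [[b [m [hm ->]]] ->]]].
- by exists b, (m + a *: q); split; [exists a, m|rewrite addrAC].
- by exists b, (m + a *: p); split; [exists a, m|rewrite addrAC].
Qed.

Lemma capsp_subspace S T : subspace S -> subspace T -> subspace (capsp S T).
Proof.
move=> hS hT; split; first by split; apply: subspace0.
by move=> a x y [h1 h2] [h3 h4]; split; [apply: (proj2 hS)|apply: (proj2 hT)].
Qed.

Lemma sumsp_subspace S T : subspace S -> subspace T -> subspace (sumsp S T).
Proof.
move=> hS hT; split.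
  by exists 0, 0; rewrite addr0; do !split; apply: subspace0.
move=> a x y [x1 [y1 [h1 [h2 ->]]]] [x2 [y2 [h3 [h4 ->]]]].
exists (a *: x1 + x2), (a *: y1 + y2); split; first exact: (proj2 hS).
by split; [exact: (proj2 hT)|rewrite scalerDr addrACA].
Qed.

Lemma le_sumspl S T : subspace T -> subsp_le S (sumsp S T).
Proof. by move=> hT x hx; exists x, 0; rewrite addr0; do !split=> //; apply: subspace0. Qed.

Lemma le_sumspr S T : subspace S -> subsp_le T (sumsp S T).
Proof. by move=> hS x hx; exists 0, x; rewrite add0r; split=> //; apply: subspace0. Qed.

Lemma sumsp_le S T U : subspace U -> subsp_le S U -> subsp_le T U ->
  subsp_le (sumsp S T) U.
Proof.
by move=> hU h1 h2 w [x [y [hx [hy ->]]]]; apply: subspaceD => //; [apply: h1|apply: h2].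
Qed.

Lemma sumspC S T : sumsp S T = sumsp T S.
Proof. by apply: subsp_ext => w; split=> -[x [y [hx [hy ->]]]]; exists y, x; rewrite addrC. Qed.

Lemma sumsp_addv X M y : subspace X -> subspace M -> subsp_le M X ->
  sumsp X (addv M y) = addv X y.
Proof.
move=> hX hM hMX; apply: subsp_ext => w; split.
- move=> [x [z [hx [[a [m [hm ->]]] ->]]]].
  exists a, (x + m); split; last by rewrite addrA.
  by apply: subspaceD => //; apply: hMX.
- move=> [a [x [hx ->]]]; exists x, (a *: y); do !split=> //.
  by exists a, 0; rewrite add0r; split=> //; apply: subspace0.
Qed.

Lemma codim1E S T : codim1 S T <-> exists v, ~ S v /\ T = addv S v.
Proof.
split=> -[v [hv h]]; exists v; split=> //; first exact: subsp_ext.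
by move=> w; rewrite h.
Qed.

Lemma adjC X Y : adj X Y -> adj Y X.
Proof. by rewrite /adj sumspC => -[]. Qed.

Lemma adj_not_le X Y : subspace X -> subspace Y -> adj X Y -> ~ subsp_le X Y.
Proof.
move=> hX hY [_ /codim1E [v [hv ev]]] hle; apply: hv.
have : sumsp X Y v by rewrite ev; apply: addv_vec.
exact: sumsp_le.
Qed.

Lemma adj_irrefl X : subspace X -> ~ adj X X.
Proof. by move=> hX /(adj_not_le hX hX); apply. Qed.

Lemma Gr_subspace (X : Gr V) : subspace (proj1_sig X).
Proof. exact: proj1 (proj2_sig X). Qed.

Lemma Gr_inj (X Y : Gr V) : proj1_sig X = proj1_sig Y -> X = Y.
Proof. by case: X Y => [X hX] [Y hY] /= e; subst; f_equal; exact: proof_irrelevance. Qed.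

End Subspaces.

Section DivisionRing.
Variables (K : unitRingType) (V : lmodType K).
Hypothesis HK : forall x : K, x != 0 -> x \is a GRing.unit.
Implicit Types (S T U X Y Z W M N : V -> Prop).

Lemma mulVf_neq0 (a : K) : a != 0 -> a^-1 * a = 1.
Proof. by move=> h; rewrite mulVr // HK. Qed.

Lemma solve_addv (s w v : V) (a : K) : a != 0 -> w = s + a *: v ->
  v = a^-1 *: w - a^-1 *: s.
Proof.
by move=> a0 ->; rewrite scalerDr addrAC subrr add0r scalerA mulVf_neq0 // scale1r.
Qed.

Lemma addv_eq_of_between S U v u : subspace S -> subspace U -> ~ S v ->
  subsp_le S U -> subsp_le U (addv S v) -> U u -> ~ S u -> U = addv S v.
Proof.
move=> hS hU hv hSU hUS hu hnu; apply: subsp_le_anti => //.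
apply: addv_le => //; have [a [s [hs es]]] := hUS u hu.
have a0 : a != 0 by apply/eqP => a0; apply: hnu; rewrite es a0 scale0r addr0.
rewrite (solve_addv a0 es).
by apply: subspaceB => //; apply: subspaceZ => //; apply: hSU.
Qed.

Lemma addv_exchange T v u : subspace T -> ~ T v -> addv T v u -> ~ T u ->
  addv T u = addv T v.
Proof.
move=> hT hv hu hnu; apply: addv_eq_of_between (addv_vec hT u) hnu => //.
- exact: addv_subspace.
- exact: le_addv.
- by apply: addv_le; [exact: addv_subspace|exact: le_addv|].
Qed.

Lemma addv2_eq M a b u v : subspace M ->
  addv (addv M a) b u -> ~ M u -> addv (addv M a) b v -> ~ addv M u v ->
  addv (addv M a) b = addv (addv M u) v.
Proof.
move=> hM hu hnu hv hnv.
have hMa := addv_subspace hM a.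
have [c ec] : exists c, addv (addv M a) b = addv (addv M u) c.
  case: (classic (addv M a u)) => hua.
  - have na : ~ M a by move=> ha; apply: hnu; rewrite (addv_id hM ha) in hua.
    by exists b; rewrite (addv_exchange hM na hua hnu).
  - have nb : ~ addv M a b by move=> hb; apply: hua; rewrite (addv_id hMa hb) in hu.
    by exists a; rewrite -(addv_exchange hMa nb hu hua) addvAC.
rewrite ec in hv *; have hMu := addv_subspace hM u.
have nc : ~ addv M u c by move=> hc; apply: hnv; rewrite (addv_id hMu hc) in hv.
by symmetry; apply: addv_exchange.
Qed.

Lemma adj_decomp X Y : subspace X -> subspace Y -> adj X Y ->
  exists x y, X x /\ ~ Y x /\ Y y /\ ~ X y /\
    X = addv (capsp X Y) x /\ Y = addv (capsp X Y) y /\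
    sumsp X Y = addv X y /\ sumsp X Y = addv Y x.
Proof.
move=> hX hY [/codim1E [v [hv ev]] /codim1E [u [hu eu]]].
have hS := sumsp_subspace hX hY.
have [y [hy nyX]] : exists y, Y y /\ ~ X y.
  apply: NNPP => hn; apply: hv.
  suff : subsp_le (sumsp X Y) X by apply; rewrite ev; apply: addv_vec.
  apply: sumsp_le => // z hz; apply: NNPP => nz; apply: hn; by exists z.
have [x [hx nxY]] : exists x, X x /\ ~ Y x.
  apply: NNPP => hn; apply: hu.
  suff : subsp_le (sumsp X Y) Y by apply; rewrite eu; apply: addv_vec.
  apply: sumsp_le => // z hz; apply: NNPP => nz; apply: hn; by exists z.
have e1 : sumsp X Y = addv X y.
  by rewrite ev; symmetry; apply: addv_exchange => //; rewrite -ev; exact: le_sumspr.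
have e2 : sumsp X Y = addv Y x.
  by rewrite eu; symmetry; apply: addv_exchange => //; rewrite -eu; exact: le_sumspl.
have hC := capsp_subspace hX hY.
exists x, y; do 4 (split=> //); split; last split=> //.
- apply: subsp_le_anti; last by apply: addv_le => // z [].
  move=> z hz; have : sumsp X Y z by apply: le_sumspl.
  rewrite e2 => -[a [t [ht ez]]]; exists a, t; do !split=> //.
  have -> : t = z - a *: x by rewrite ez addrK.
  by apply: subspaceB => //; apply: subspaceZ.
- apply: subsp_le_anti; last by apply: addv_le => // z [].
  move=> z hz; have : sumsp X Y z by apply: le_sumspr.
  rewrite e1 => -[a [t [ht ez]]]; exists a, t; do !split=> //.
  have -> : t = z - a *: y by rewrite ez addrK.
  by apply: subspaceB => //; apply: subspaceZ.
Qed.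

Lemma adj_addv M a b : subspace M -> ~ M a -> ~ M b -> addv M a <> addv M b ->
  adj (addv M a) (addv M b).
Proof.
move=> hM ha hb ne.
have nab : ~ addv M a b by move=> h; apply: ne; symmetry; exact: addv_exchange.
have nba : ~ addv M b a by move=> h; apply: ne; exact: addv_exchange.
have hMa := addv_subspace hM a; have hMb := addv_subspace hM b.
split; apply/codim1E.
- by exists b; split=> //; apply: sumsp_addv => //; exact: le_addv.
- by exists a; split=> //; rewrite sumspC; apply: sumsp_addv => //; exact: le_addv.
Qed.

Lemma adj_codim1_common A B N : subspace A -> subspace B -> subspace N ->
  codim1 A N -> codim1 B N -> A <> B -> adj A B.
Proof.
move=> hA hB hN /codim1E [a [ha ea]] /codim1E [b [hb eb]] ne.
have hAN : subsp_le A N by rewrite ea; apply: le_addv.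
have hBN : subsp_le B N by rewrite eb; apply: le_addv.
have [c [hc nc]] : exists c, B c /\ ~ A c.
  apply: NNPP => hn; apply: ne.
  have BA : subsp_le B A by move=> z hz; apply: NNPP => nz; apply: hn; exists z.
  apply: subsp_le_anti => // z hz; apply: NNPP => nz.
  have eA : A = addv B b by apply: (addv_eq_of_between hB hA hb BA _ hz nz); rewrite -eb.
  by apply: ha; rewrite eA -eb ea; apply: addv_vec.
have eS : sumsp A B = N.
  rewrite ea; apply: (addv_eq_of_between hA (sumsp_subspace hA hB) ha _ _ _ nc).
  - exact: le_sumspl.
  - by rewrite -ea; apply: sumsp_le.
  - exact: le_sumspr hc.
by split; rewrite eS; apply/codim1E; [exists a|exists b].
Qed.

End DivisionRing.

Section Pencils.
Variables (K : unitRingType) (V : lmodType K).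
Hypothesis HK : forall x : K, x != 0 -> x \is a GRing.unit.
Implicit Types (S T U X Y Z W M N : V -> Prop).

Definition pencil_of X Y Z := subsp_lt (capsp X Y) Z /\ subsp_lt Z (sumsp X Y).

Lemma pencil_mem_addv M X0 N Z : subspace M -> subspace N -> subspace Z ->
  codim1 M X0 -> codim1 X0 N -> subsp_lt M Z -> subsp_lt Z N ->
  exists z, ~ M z /\ Z = addv M z /\ codim1 Z N.
Proof.
move=> hM hN hZ /codim1E [x0 [_ ->]] /codim1E [n [_ en]].
move=> [hMZ [z [hz nz]]] [hZN [n' [hn' nn']]].
have hzN : addv (addv M x0) n z by rewrite -en; apply: hZN.
have ez : Z = addv M z.
  apply: subsp_le_anti; last exact: addv_le.
  move=> t ht; apply: NNPP => nt.
  have htN : addv (addv M x0) n t by rewrite -en; apply: hZN.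
  apply: nn'; move: hn'; rewrite en (addv2_eq HK hM hzN nz htN nt).
  by apply: addv_le => //; apply: addv_le.
have hnN : addv (addv M x0) n n' by rewrite -en.
exists z; do !split=> //; apply/codim1E; exists n'; split=> //.
by rewrite en ez; apply: addv2_eq => //; rewrite -ez.
Qed.

Lemma pencil_adj (P : Gr V -> Prop) (X Y : Gr V) : is_pencil P -> P X -> P Y -> X <> Y ->
  adj (proj1_sig X) (proj1_sig Y).
Proof.
move=> [M [N [hM [hN [[X0 [_ [_ [c1 c2]]]] hP]]]]] /hP [l1 l2] /hP [l3 l4] ne.
have [x [nx [ex _]]] := pencil_mem_addv hM hN (Gr_subspace X) c1 c2 l1 l2.
have [y [ny [ey _]]] := pencil_mem_addv hM hN (Gr_subspace Y) c1 c2 l3 l4.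
rewrite ex ey; apply: adj_addv => //.
by rewrite -ex -ey => e; apply: ne; apply: Gr_inj.
Qed.

Lemma pencil_of_ends X Y : subspace X -> subspace Y -> adj X Y ->
  pencil_of X Y X /\ pencil_of X Y Y.
Proof.
move=> hX hY h; have [x [y [hx [nx [hy [ny _]]]]]] := adj_decomp HK hX hY h.
split; split; split.
- by move=> z [].
- by exists x; split=> // -[].
- exact: le_sumspl.
- by exists y; split=> //; apply: le_sumspr.
- by move=> z [].
- by exists y; split=> // -[].
- exact: le_sumspr.
- by exists x; split=> //; apply: le_sumspl.
Qed.

Lemma is_pencil_of (X Y : Gr V) : adj (proj1_sig X) (proj1_sig Y) ->
  is_pencil (fun Z : Gr V => pencil_of (proj1_sig X) (proj1_sig Y) (proj1_sig Z)).
Proof.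
move=> h; have hX := Gr_subspace X; have hY := Gr_subspace Y.
have [x [y [_ [nx [_ [ny [ex [_ [e1 _]]]]]]]]] := adj_decomp HK hX hY h.
exists (capsp (proj1_sig X) (proj1_sig Y)), (sumsp (proj1_sig X) (proj1_sig Y)).
do 2 (split; first by [apply: capsp_subspace|apply: sumsp_subspace]).
split=> //; exists X; split; first by move=> z [].
split; first exact: le_sumspl.
by split; apply/codim1E; [exists x|exists y]; split=> //; case.
Qed.

Lemma common_neighbour_cases X Y W : subspace X -> subspace Y -> subspace W ->
  adj X Y -> adj W X -> adj W Y ->
  subsp_le (capsp X Y) W \/ subsp_le W (sumsp X Y).
Proof.
move=> hX hY hW hXY hWX hWY.
case: (classic (subsp_le (capsp X Y) W)) => h; [by left|right].
have [m [hm nm]] : exists m, capsp X Y m /\ ~ W m.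
  apply: NNPP => hn; apply: h => z hz; apply: NNPP => nz; apply: hn; by exists z.
have [w [_ [_ [_ [_ [_ [ew _]]]]]]] := adj_decomp HK hW hX hWX.
have [_ [y1 [_ [_ [_ [ny1 [_ [ey _]]]]]]]] := adj_decomp HK hW hY hWY.
have eY : Y = addv (capsp W Y) m.
  have n1 : ~ capsp W Y y1 by case.
  have n2 : ~ capsp W Y m by case.
  have h2 : addv (capsp W Y) y1 m by rewrite -ey; case: hm.
  by rewrite {1}ey (addv_exchange HK (capsp_subspace hW hY) n1 h2 n2).
have [_ [y [_ [_ [hy [nyX _]]]]]] := adj_decomp HK hX hY hXY.
have [c [wy [[hwyW hwyY] ey']]] : addv (capsp W Y) m y by rewrite -eY.
have nwy : ~ X wy.
  by move=> hxwy; apply: nyX; rewrite ey'; apply: subspaceD => //; apply: subspaceZ => //; case: hm.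
have [d [u [[_ hu] eu]]] : addv (capsp W X) w wy by rewrite -ew.
have d0 : d != 0 by apply/eqP => d0; apply: nwy; rewrite eu d0 scale0r addr0.
rewrite {1}ew; apply: addv_le; first exact: sumsp_subspace.
  by move=> z [_ hz]; apply: le_sumspl.
rewrite (solve_addv HK d0 eu); apply: subspaceB; first exact: sumsp_subspace.
  by apply: subspaceZ; [exact: sumsp_subspace|exact: le_sumspr].
by apply: subspaceZ; [exact: sumsp_subspace|exact: le_sumspl].
Qed.

Lemma adj_addv_cap W X M x : subspace W -> subspace X -> subspace M -> adj W X ->
  subsp_le M W -> X = addv M x -> ~ M x -> exists w, ~ M w /\ W = addv M w.
Proof.
move=> hW hX hM h hMW eX nx.
have [w [x1 [_ [nw [hx1 [nx1 [ew _]]]]]]] := adj_decomp HK hW hX h.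
have MC : subsp_le M (capsp W X).
  by move=> z hz; split; [apply: hMW|rewrite eX; apply: le_addv].
have eC : capsp W X = M.
  apply: subsp_le_anti => // t ht; apply: NNPP => nt.
  have e : capsp W X = addv M x.
    apply: (addv_eq_of_between HK hM (capsp_subspace hW hX) nx MC _ ht nt).
    by rewrite -eX => z [].
  by have [] : capsp W X x1 by rewrite e -eX.
exists w; split; last by rewrite -eC.
by move=> hmw; apply: nw; rewrite eX; apply: le_addv.
Qed.

Lemma adj_le_codim1 W X N y : subspace W -> subspace X -> subspace N -> adj W X ->
  subsp_le W N -> N = addv X y -> ~ X y -> codim1 W N.
Proof.
move=> hW hX hN h hWN eN ny.
have [w1 [x1 [hw1 [nw1 [_ [nx1 [_ [_ [e1 _]]]]]]]]] := adj_decomp HK hW hX h.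
have eS : sumsp W X = N.
  rewrite eN; apply: (addv_eq_of_between HK hX (sumsp_subspace hW hX) ny _ _ _ nw1).
  - exact: le_sumspr.
  - by rewrite -eN; apply: sumsp_le => //; rewrite eN; apply: le_addv.
  - exact: le_sumspl hw1.
by apply/codim1E; exists x1; split=> //; rewrite -eS.
Qed.

End Pencils.

Section Hyperplanes.
Variables (K : unitRingType) (V : lmodType K).
Hypothesis HK : forall x : K, x != 0 -> x \is a GRing.unit.
Implicit Types (S H X Y : V -> Prop).

(* Zorn's lemma, applied to the sets A whose union with S is a subspace avoiding w. *)
Lemma hyperplane_avoiding S w : subspace S -> ~ S w -> exists H,
  subspace H /\ subsp_le S H /\ ~ H w /\ forall v, exists a, H (v - a *: w).
Proof.
move=> hS nw.
pose U (A : V -> Prop) := fun v => A v \/ S v.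
pose P (A : V -> Prop) := (forall a x y, U A x -> U A y -> U A (a *: x + y)) /\ ~ A w.
have [A [[cA nA] maxA]] : exists A, P A /\ (forall B, classical_sets.proper A B -> ~ P B).
  apply: classical_sets.Zorn_bigcup => F FP Ftot; split; last first.
    by move=> [X FX Xw]; apply: (proj2 (FP X FX)).
  move=> a x y.
  have lift X (FX : F X) u : U X u -> U (classical_sets.bigcup F id) u.
    by case=> [Xu|Su]; [left; exists X|right].
  case=> [[X FX Xx]|Sx] [[Y FY Yy]|Sy].
  - case: (Ftot X Y FX FY) => sub.
    + by apply: (lift Y FY); apply: (proj1 (FP Y FY)); left; [apply: sub|].
    + by apply: (lift X FX); apply: (proj1 (FP X FX)); left; [|apply: sub].
  - by apply: (lift X FX); apply: (proj1 (FP X FX)); [left|right].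
  - by apply: (lift Y FY); apply: (proj1 (FP Y FY)); [right|left].
  - by right; apply: (proj2 hS).
have hH : subspace (U A) by split; [right; apply: subspace0|exact: cA].
have nH : ~ U A w by case.
exists (U A); split=> //; split; first by move=> x hx; right.
split=> // v; apply: NNPP => hv.
pose B := addv (U A) v.
apply: (maxA B).
  split; first by move=> z hz; exists 0, z; split; [left|rewrite scale0r addr0].
  move=> BA; apply: hv; exists 0; rewrite scale0r subr0; left; apply: BA.
  exact: addv_vec.
have hB : forall z, U B z -> B z by move=> z [//|hz]; apply: le_addv; right.
split.
  move=> a x y /hB hx /hB hy; left.
  by apply: (proj2 (addv_subspace hH v)).
move=> [c [h [hh ew]]].
have c0 : c != 0 by apply/eqP => c0; apply: nH; rewrite ew c0 scale0r addr0.
apply: hv; exists c^-1.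
rewrite (solve_addv HK c0 ew) addrAC subrr add0r -scaleNr.
by apply: subspaceZ.
Qed.

Definition linear_form (mu : V -> K) :=
  forall a v v', mu (a *: v + v') = a * mu v + mu v'.

Section LinearForm.
Variables (mu : V -> K) (lmu : linear_form mu).

Lemma linear_form0 : mu 0 = 0.
Proof. by apply: (@addrI _ (mu 0)); rewrite addr0 -{1}(mul1r (mu 0)) -lmu addr0 scale1r. Qed.

Lemma linear_formD u v : mu (u + v) = mu u + mu v.
Proof. by rewrite -{1}(scale1r u) lmu mul1r. Qed.

Lemma linear_formZ a u : mu (a *: u) = a * mu u.
Proof. by rewrite -[a *: u]addr0 lmu linear_form0 addr0. Qed.

Lemma linear_formB u v : mu (u - v) = mu u - mu v.
Proof. by rewrite linear_formD -scaleN1r linear_formZ mulN1r. Qed.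

End LinearForm.

Lemma linear_form_separating S w : subspace S -> ~ S w -> exists mu : V -> K,
  linear_form mu /\ (forall s, S s -> mu s = 0) /\ mu w = 1.
Proof.
move=> hS nw; have [H [hH [hSH [nH hall]]]] := hyperplane_avoiding hS nw.
have coord_uniq v a b : H (v - a *: w) -> H (v - b *: w) -> a = b.
  move=> ha hb; apply/eqP; rewrite -subr_eq0; apply/negPn/negP => ne; apply: nH.
  have : H ((a - b) *: w).
    have <- : (v - b *: w) - (v - a *: w) = (a - b) *: w.
      by rewrite scalerBl opprB addrC addrA subrK.
    exact: subspaceB.
  by move/(subspaceZ hH ((a - b)^-1)); rewrite scalerA mulVf_neq0 ?scale1r.
pose mu v := proj1_sig (constructive_indefinite_description _ (hall v)).
have muP v : H (v - mu v *: w) := proj2_sig (constructive_indefinite_description _ (hall v)).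
exists mu; split; last split.
- move=> a v v'; symmetry; apply: (coord_uniq (a *: v + v')); last exact: muP.
  rewrite scalerDl -scalerA opprD addrACA -scalerBr.
  by apply: (proj2 hH); apply: muP.
- move=> s hs; symmetry; apply: (coord_uniq s); last exact: muP.
  by rewrite scale0r subr0; apply: hSH.
- symmetry; apply: (coord_uniq w); last exact: muP.
  by rewrite scale1r subrr; apply: subspace0.
Qed.

Lemma inG_involution X (phi : V -> V) :
  (forall a u v, phi (a *: u + v) = a *: phi u + phi v) -> (forall v, phi (phi v) = v) ->
  inG X -> inG (fun v => X (phi v)).
Proof.
move=> lin inv [hX [f [flin [finj fsur]]]].
have phiD u v : phi (u + v) = phi u + phi v by rewrite -{1}(scale1r u) lin scale1r.
have phi0 : phi 0 = 0 by apply: (@addrI _ (phi 0)); rewrite -phiD !addr0.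
have phiB u v : phi (u - v) = phi u - phi v.
  by rewrite -scaleN1r addrC lin addrC scaleN1r.
split.
- split; first by rewrite phi0; apply: subspace0.
  by move=> a x y hx hy; rewrite lin; apply: (proj2 hX).
- exists (fun v => phi (f (phi v))); split; last split.
  + by move=> a x y hx hy /=; rewrite lin flin // lin.
  + by move=> x hx; rewrite inv => hfx; rewrite -(inv x) (finj _ hx hfx) phi0.
  + move=> v; have [x' [hx' hr]] := fsur (phi v).
    by exists (phi x'); rewrite phiB !inv.
Qed.

(* The swap x <-> y fixing X :&: Y is a linear involution mapping X onto Y. *)
Lemma inG_adj X Y : inG X -> subspace Y -> adj X Y -> inG Y.
Proof.
move=> hG hY h; have hX := proj1 hG.
have [x [y [_ [nx [_ [ny [ex [ey _]]]]]]]] := adj_decomp HK hX hY h.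
have hC := capsp_subspace hX hY.
have [mu [lmu [mu0 mux]]] : exists mu : V -> K,
    linear_form mu /\ (forall s, addv (capsp X Y) y s -> mu s = 0) /\ mu x = 1.
  by apply: linear_form_separating; [apply: addv_subspace|rewrite -ey].
have [nu [lnu [nu0 nuy]]] : exists nu : V -> K,
    linear_form nu /\ (forall s, addv (capsp X Y) x s -> nu s = 0) /\ nu y = 1.
  by apply: linear_form_separating; [apply: addv_subspace|rewrite -ex].
pose lam v := mu v - nu v.
have llam : linear_form lam by move=> a u v; rewrite /lam lmu lnu mulrBr addrACA opprD.
have muy : mu y = 0 by apply: mu0; apply: addv_vec.
have nux : nu x = 0 by apply: nu0; apply: addv_vec.
have lamC c : capsp X Y c -> lam c = 0.
  by move=> hc; rewrite /lam mu0 ?nu0 ?subrr //; apply: le_addv.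
pose phi v := v + lam v *: (y - x).
have lin a u v : phi (a *: u + v) = a *: phi u + phi v.
  by rewrite /phi llam scalerDl -scalerA [a *: (u + _)]scalerDr addrACA.
have lamd : lam (y - x) = -1 - 1.
  by rewrite /lam !linear_formB // muy mux nuy nux sub0r subr0.
have inv v : phi (phi v) = v.
  rewrite /phi linear_formD // linear_formZ // lamd.
  have -> : lam v + lam v * (-1 - 1) = - lam v.
    by rewrite mulrBr mulrN1 addrA subrr add0r mulr1.
  by rewrite scaleNr -addrA subrr addr0.
have phiC c : capsp X Y c -> phi c = c by move=> hc; rewrite /phi lamC // scale0r addr0.
have phix : phi x = y by rewrite /phi /lam mux nux subr0 scale1r addrC subrK.
have phiy : phi y = x by rewrite /phi /lam muy nuy sub0r scaleN1r opprB addrC subrK.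
have -> : Y = (fun v => X (phi v)).
  apply: subsp_ext => v; split.
  - rewrite {1}ey => -[a [c [hc ->]]].
    by rewrite addrC lin phiy phiC // ex; exists a, c; rewrite addrC.
  - move=> hv; rewrite -(inv v); move: hv; rewrite {1}ex => -[a [c [hc ->]]].
    by rewrite addrC lin phix phiC // ey; exists a, c; rewrite addrC.
exact: inG_involution.
Qed.

End Hyperplanes.

Section Dimension.
Variables (K : unitRingType) (V : lmodType K).
Hypothesis HK : forall x : K, x != 0 -> x \is a GRing.unit.
Hypothesis Hdim : dim_gt2 V.
Implicit Types (X M : V -> Prop).

Definition zerosp : V -> Prop := fun t => t = 0.

Lemma zerosp_subspace : subspace zerosp.
Proof. by split=> // a x y -> ->; rewrite scaler0 addr0. Qed.

Lemma not_spanned_by2 (a b : V) : ~ (forall v, exists c d, v = c *: a + d *: b).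
Proof.
move=> hall; have [u [v [w hind]]] := Hdim.
have inN t : addv (addv zerosp a) b t.
  by have [c [d ->]] := hall t; exists d, (c *: a); split=> //; exists c, 0; rewrite add0r.
have n10 : (1 : K) <> 0 by apply/eqP; exact: oner_neq0.
have nm10 : (- 1 : K) <> 0 by apply/eqP; rewrite oppr_eq0; exact: oner_neq0.
case: (classic (u = 0)) => [u0|nu0].
  by apply: n10; apply: (proj1 (hind 1 0 0 _)); rewrite u0 !scale0r scaler0 !addr0.
case: (classic (addv zerosp u v)) => [[c [z [z0 ev]]]|nv].
  apply: nm10; apply: (proj1 (proj2 (hind c (-1) 0 _))).
  by rewrite ev z0 add0r scale0r addr0 scaleN1r subrr.
have := inN w; rewrite (addv2_eq HK zerosp_subspace (inN u) nu0 (inN v) nv).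
move=> -[d [t [[c [z [z0 et]]] ew]]].
apply: nm10; apply: (proj2 (proj2 (hind c d (-1) _))).
by rewrite ew et z0 add0r scaleN1r subrr.
Qed.

Lemma iso_quot0 X (f : V -> V) : subspace X ->
  (forall (a : K) x y, X x -> X y -> f (a *: x + y) = a *: f x + f y) -> f 0 = 0.
Proof.
move=> hX fl; apply: (@addrI _ (f 0)).
by rewrite -{1}(scale1r (f 0)) -fl ?scale1r ?addr0 //; apply: subspace0.
Qed.

(* If X + Ky were V, then V/X, hence X, would be a line and V a plane. *)
Lemma inG_addv_proper X y : inG X -> exists u, ~ addv X y u.
Proof.
move=> [hX [f [fl [fi fs]]]]; apply: NNPP => hn.
have hall u : addv X y u by apply: NNPP => nu; apply: hn; exists u.
have [x0 [hx0 hy0]] := fs y.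
have cl x : X x -> exists a : K, x = a *: x0.
  move=> hx; have [a [x1 [hx1 ef]]] := hall (f x); exists a.
  have h1 : X ((- a) *: x0 + x) by apply: (proj2 hX).
  have h2 : X (f ((- a) *: x0 + x)).
    rewrite fl // ef scaleNr addrCA -scalerN -scalerDr.
    by apply: subspaceD => //; apply: subspaceZ => //; rewrite addrC.
  by have := fi _ h1 h2; rewrite scaleNr addrC => /eqP; rewrite subr_eq0 => /eqP.
apply: (@not_spanned_by2 x0 y) => v; have [b [x [hx ->]]] := hall v.
by have [a ->] := cl x hx; exists a, b.
Qed.

(* If M were zero, X would be a line and V = X + f(X) a plane. *)
Lemma inG_codim1_nonzero X M x : inG X -> subspace M -> X = addv M x ->
  exists m, M m /\ m <> 0.
Proof.
move=> [hX [f [fl [fi fs]]]] hM eX; apply: NNPP => hn.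
have hM0 m : M m -> m = 0 by move=> hm; apply: NNPP => nm; apply: hn; exists m.
have f0 := iso_quot0 hX fl.
apply: (@not_spanned_by2 x (f x)) => v.
have [x' [hx' hr]] := fs v.
move: (hx') (hr); rewrite eX => -[a [m [hm ex']]] [b [m' [hm' er]]].
rewrite (hM0 _ hm) add0r in ex'; rewrite (hM0 _ hm') add0r in er.
have hx : X x by rewrite eX; apply: addv_vec.
have efx : f x' = a *: f x by rewrite ex' -[a *: x]addr0 fl ?f0 ?addr0 //; apply: subspace0.
by exists b, a; rewrite -efx -er subrK.
Qed.

End Dimension.

Section GraphLines.
Variables (K : unitRingType) (V : lmodType K).
Hypothesis HK : forall x : K, x != 0 -> x \is a GRing.unit.
Hypothesis Hdim : dim_gt2 V.

Definition adjG (X Y : Gr V) := adj (proj1_sig X) (proj1_sig Y).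

Definition central_neighbour (X Y Z : Gr V) :=
  adjG Z X /\ adjG Z Y /\ forall W, adjG W X -> adjG W Y -> W = Z \/ adjG W Z.

Definition graph_line (X Y Z : Gr V) := Z = X \/ Z = Y \/ central_neighbour X Y Z.

Section AdjacentPair.
Variables (X Y : Gr V) (x y : V).
Hypothesis hXY : adjG X Y.
Hypotheses (nx : ~ proj1_sig Y x) (ny : ~ proj1_sig X y).
Local Notation C := (capsp (proj1_sig X) (proj1_sig Y)).
Local Notation S := (sumsp (proj1_sig X) (proj1_sig Y)).
Hypotheses (ex : proj1_sig X = addv C x) (ey : proj1_sig Y = addv C y).
Hypotheses (eSX : S = addv (proj1_sig X) y) (eSY : S = addv (proj1_sig Y) x).

Let hX := Gr_subspace X.
Let hY := Gr_subspace Y.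
Let hC : subspace C := capsp_subspace hX hY.
Let hS : subspace S := sumsp_subspace hX hY.
Let CX : subsp_le C (proj1_sig X). Proof. by move=> t []. Qed.
Let CY : subsp_le C (proj1_sig Y). Proof. by move=> t []. Qed.
Let XS : subsp_le (proj1_sig X) S := le_sumspl hY.
Let YS : subsp_le (proj1_sig Y) S := le_sumspr hX.
Let nxC : ~ C x. Proof. by case. Qed.
Let nyC : ~ C y. Proof. by case. Qed.
Let cXS : codim1 (proj1_sig X) S. Proof. by apply/codim1E; exists y. Qed.
Let cYS : codim1 (proj1_sig Y) S. Proof. by apply/codim1E; exists x. Qed.

Lemma pencil_of_central Z : pencil_of (proj1_sig X) (proj1_sig Y) (proj1_sig Z) ->
  Z <> X -> Z <> Y -> central_neighbour X Y Z.
Proof.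
move=> hL nZX nZY; have hP := is_pencil_of HK hXY.
have [inX inY] := pencil_of_ends HK hX hY hXY.
have aZX : adjG Z X by apply: (pencil_adj HK hP).
have aZY : adjG Z Y by apply: (pencil_adj HK hP).
split=> //; split=> // W aWX aWY.
have hW := Gr_subspace W.
have cCX : codim1 C (proj1_sig X) by apply/codim1E; exists x.
have [z [nz [ez cZS]]] := pencil_mem_addv HK hC hS (Gr_subspace Z) cCX cXS hL.1 hL.2.
case: (classic (W = Z)) => [->|nWZ]; [by left|right].
have nWZ' : proj1_sig W <> proj1_sig Z by move=> e; apply: nWZ; apply: Gr_inj.
case: (common_neighbour_cases HK hX hY hW hXY aWX aWY) => hle.
- have [w [nw ew]] := adj_addv_cap HK hW hX hC aWX hle ex nxC.
  by rewrite /adjG ew ez; apply: adj_addv => //; rewrite -ew -ez.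
- have cWS := adj_le_codim1 HK hW hX hS aWX hle eSX ny.
  exact: (adj_codim1_common HK hW (Gr_subspace Z) hS cWS cZS).
Qed.

(* Otherwise a hyperplane W of X + Y not containing X :&: Y is a common neighbour,
   and centrality would force Z <= W + Z = X + Y. *)
Lemma central_le_sum Z : central_neighbour X Y Z ->
  subsp_le C (proj1_sig Z) -> subsp_le (proj1_sig Z) S.
Proof.
move=> [_ [_ hWall]] hCZ; apply: NNPP => hn.
have hZ := Gr_subspace Z.
have [z0 [hz0 nz0]] : exists z0, proj1_sig Z z0 /\ ~ S z0.
  apply: NNPP => h; apply: hn => t ht; apply: NNPP => nt; apply: h; by exists t.
have [m0 [hm0 nm0]] := inG_codim1_nonzero HK Hdim (proj2_sig X) hC ex.
have [H0 [hH0 [_ [nH0 hall]]]] := hyperplane_avoiding HK (@zerosp_subspace K V) nm0.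
pose W := capsp H0 S.
have hW : subspace W by apply: capsp_subspace.
have m0S : S m0 by apply: XS; apply: CX.
have nWm0 : ~ W m0 by case.
have eSW : S = addv W m0.
  apply: subsp_le_anti; last by apply: addv_le => // t [].
  move=> t ht; have [a ha] := hall t; exists a, (t - a *: m0); split; last by rewrite subrK.
  by split=> //; apply: subspaceB => //; exact: subspaceZ.
have cWS : codim1 W S by apply/codim1E; exists m0.
have nWX : W <> proj1_sig X by move=> e; apply: nWm0; rewrite e; apply: CX.
have nWY : W <> proj1_sig Y by move=> e; apply: nWm0; rewrite e; apply: CY.
have hWG : inG W.
  apply: (inG_adj HK (proj2_sig X) hW); apply: (adj_codim1_common HK hX hW hS) => //.
  by move=> e; apply: nWX.
have [eWZ|] := hWall (exist _ W hWG) (adj_codim1_common HK hW hX hS cWS cXS nWX)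
                                     (adj_codim1_common HK hW hY hS cWS cYS nWY).
  by apply: nz0; move: hz0; rewrite -eWZ /= /W; case.
rewrite /adjG /= => -[/codim1E [t [nt et]] _].
have WS : subsp_le W S by move=> q [].
have Ssum : subsp_le S (sumsp W (proj1_sig Z)).
  rewrite eSW; apply: addv_le; [by apply: sumsp_subspace|by apply: le_sumspl|].
  by apply: le_sumspr => //; apply: hCZ.
have eS : S = addv W t by apply: (addv_eq_of_between HK hW hS nt WS _ m0S nWm0); rewrite -et.
by apply: nz0; rewrite eS -et; apply: le_sumspr.
Qed.

(* Otherwise W := (X :&: Y) + Ku, with u outside X + Y, is a common neighbour,
   and centrality would force u \in W + Z = X + Y. *)
Lemma central_cap_le Z : central_neighbour X Y Z ->
  subsp_le (proj1_sig Z) S -> subsp_le C (proj1_sig Z).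
Proof.
move=> [aZX [_ hWall]] hZS; apply: NNPP => hn.
have hZ := Gr_subspace Z.
have [m1 [hm1 nm1]] : exists m1, C m1 /\ ~ proj1_sig Z m1.
  apply: NNPP => h; apply: hn => t ht; apply: NNPP => nt; apply: h; by exists t.
have [u nu] := inG_addv_proper HK Hdim y (proj2_sig X).
rewrite -eSX in nu.
pose W := addv C u.
have hW : subspace W by apply: addv_subspace.
have nuC : ~ C u by move=> h; apply: nu; apply: XS; apply: CX.
have nWX : W <> proj1_sig X by move=> e; apply: nu; apply: XS; rewrite -e; apply: addv_vec.
have nWY : W <> proj1_sig Y by move=> e; apply: nu; apply: YS; rewrite -e; apply: addv_vec.
have aWX : adj W (proj1_sig X).
  by rewrite [Q in adj _ Q]ex; apply: adj_addv => //; rewrite -ex.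
have aWY : adj W (proj1_sig Y).
  by rewrite [Q in adj _ Q]ey; apply: adj_addv => //; rewrite -ey.
have hWG : inG W by apply: (inG_adj HK (proj2_sig X) hW); apply: adjC.
case: (hWall (exist _ W hWG)) => // [e|].
  by apply: nu; apply: hZS; rewrite -e /=; exact: addv_vec.
rewrite /adjG /= => -[_ /codim1E [t [nt et]]].
have [t' [nt' et']] := proj1 (codim1E _ _) (adj_le_codim1 HK hZ hX hS aZX hZS eSX ny).
have eS1 : S = addv (proj1_sig Z) m1.
  by rewrite et'; symmetry; apply: addv_exchange => //; rewrite -et'; apply: XS; apply: CX.
have Ssum : subsp_le S (sumsp W (proj1_sig Z)).
  rewrite eS1; apply: addv_le; [by apply: sumsp_subspace|by apply: le_sumspr|].
  by apply: le_sumspl => //; exists 0, m1; rewrite scale0r addr0.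
have eS : S = addv (proj1_sig Z) t.
  apply: (addv_eq_of_between HK hZ hS nt hZS _ _ nm1); first by rewrite -et.
  by apply: XS; apply: CX.
by apply: nu; rewrite eS -et; apply: le_sumspl => //; exact: addv_vec.
Qed.

Lemma central_pencil_of Z : central_neighbour X Y Z ->
  pencil_of (proj1_sig X) (proj1_sig Y) (proj1_sig Z).
Proof.
move=> hZ; have [aZX [aZY _]] := hZ.
have hZ' := Gr_subspace Z.
have [hCZ hZS] : subsp_le C (proj1_sig Z) /\ subsp_le (proj1_sig Z) S.
  case: (common_neighbour_cases HK hX hY hZ' hXY aZX aZY) => h.
  - by split=> //; apply: central_le_sum.
  - by split=> //; apply: central_cap_le.
have nZX := adj_not_le hZ' hX aZX.
have nXZ := adj_not_le hX hZ' (adjC aZX).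
split; split=> //.
- apply: NNPP => h; apply: nZX => t ht; apply: NNPP => nt; apply: h.
  by exists t; split=> // hc; apply: nt; apply: CX.
- apply: NNPP => h; apply: nXZ => t ht; apply: NNPP => nt; apply: h.
  by exists t; split=> //; apply: XS.
Qed.

End AdjacentPair.

Lemma pencil_ofE (X Y Z : Gr V) : adjG X Y ->
  pencil_of (proj1_sig X) (proj1_sig Y) (proj1_sig Z) <-> graph_line X Y Z.
Proof.
move=> hXY; have [x [y [_ [nx [_ [ny [ex [ey [eSX eSY]]]]]]]]] :=
  adj_decomp HK (Gr_subspace X) (Gr_subspace Y) hXY.
have [inX inY] := pencil_of_ends HK (Gr_subspace X) (Gr_subspace Y) hXY.
split.
- move=> hL; case: (classic (Z = X)) => [->|nZX]; first by left.
  case: (classic (Z = Y)) => [->|nZY]; first by right; left.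
  by right; right; apply: (pencil_of_central hXY nx ny ex eSX).
- case=> [->|[->|hZ]] //; exact: (central_pencil_of hXY nx ny ex ey eSX eSY).
Qed.

End GraphLines.

Section Automorphisms.
Variables (K : unitRingType) (V : lmodType K).
Variables (k g : Gr V -> Gr V) (gK : cancel g k).
Hypothesis k_adj : forall X Y, adjG X Y <-> adjG (k X) (k Y).

Lemma inverse_adj X Y : adjG X Y <-> adjG (g X) (g Y).
Proof. by split=> [h|/k_adj]; [apply/k_adj; rewrite !gK|rewrite !gK]. Qed.

Lemma graph_line_transport X Y Z : graph_line X Y Z -> graph_line (k X) (k Y) (k Z).
Proof.
case=> [->|[->|[aZX [aZY hW]]]]; [by left|by right; left|right; right].
split; first exact: (proj1 (k_adj _ _) aZX).
split; first exact: (proj1 (k_adj _ _) aZY).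
move=> W aWX aWY.
have aWX' : adjG (g W) X by apply/(proj2 (k_adj _ _)); rewrite gK.
have aWY' : adjG (g W) Y by apply/(proj2 (k_adj _ _)); rewrite gK.
case: (hW _ aWX' aWY') => [e|a]; [left; by rewrite -e gK|right].
by rewrite -(gK W); apply: (proj1 (k_adj _ _)).
Qed.

End Automorphisms.

Section PencilsOfAdjacentPairs.
Variables (K : unitRingType) (V : lmodType K).
Hypothesis HK : forall x : K, x != 0 -> x \is a GRing.unit.

(* A pencil G[M, N] is spanned by its member X0 and M + Kn, where N = X0 + Kn. *)
Lemma pencil_adj_pair (P : Gr V -> Prop) : is_pencil P -> exists X Y : Gr V,
  adjG X Y /\ P = (fun Z => pencil_of (proj1_sig X) (proj1_sig Y) (proj1_sig Z)).
Proof.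
move=> [M [N [hM [hN [[X0 [hMX0 [_ [c1 c2]]]] hP]]]]].
have [n [nn eN]] := proj1 (codim1E _ _) c2.
have nMn : ~ M n by move=> h; apply: nn; apply: hMX0.
have aXY : adj (proj1_sig X0) (addv M n).
  have [x [nx eX0]] := proj1 (codim1E _ _) c1.
  rewrite [Q in adj Q _]eX0; apply: adj_addv => //; rewrite -eX0 => e.
  by apply: nn; rewrite e; exact: addv_vec.
pose Y0 : Gr V := exist _ (addv M n) (inG_adj HK (proj2_sig X0) (addv_subspace hM n) aXY).
exists X0, Y0; split=> //.
have eC : capsp (proj1_sig X0) (addv M n) = M.
  apply: subsp_le_anti; last by move=> t ht; split; [apply: hMX0|apply: le_addv].
  move=> t [ht1 [a [m [hm et]]]].
  case: (classic (a = 0)) => [a0|/eqP a0]; first by rewrite et a0 scale0r addr0.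
  exfalso; apply: nn; rewrite (solve_addv HK a0 et).
  have hX0 := Gr_subspace X0.
  by apply: subspaceB => //; apply: subspaceZ => //; apply: hMX0.
have eS : sumsp (proj1_sig X0) (addv M n) = N by rewrite sumsp_addv ?eN //; exact: Gr_subspace.
apply: functional_extensionality => Z; apply: propositional_extensionality.
by rewrite hP /pencil_of /= eC eS.
Qed.

End PencilsOfAdjacentPairs.

Lemma automorphism_image_pencil (K : unitRingType) (V : lmodType K)
  (HK : forall x : K, x != 0 -> x \is a GRing.unit) (Hdim : dim_gt2 V)
  (k g : Gr V -> Gr V) : cancel k g -> cancel g k ->
  (forall X Y, adjG X Y <-> adjG (k X) (k Y)) ->
  forall P, is_pencil P -> is_pencil (image_set k P).
Proof.
move=> kK gK k_adj P /(pencil_adj_pair HK) [X [Y [aXY ->]]].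
have aXYk : adjG (k X) (k Y) by apply: (proj1 (k_adj _ _)).
have -> : image_set k (fun Z => pencil_of (proj1_sig X) (proj1_sig Y) (proj1_sig Z)) =
          (fun Z => pencil_of (proj1_sig (k X)) (proj1_sig (k Y)) (proj1_sig Z)).
  apply: functional_extensionality => Z; apply: propositional_extensionality.
  rewrite (pencil_ofE HK Hdim _ aXYk); split.
  - by move=> [Z' [/(pencil_ofE HK Hdim _ aXY) hZ' <-]]; apply: (graph_line_transport gK k_adj).
  - move=> hZ; exists (g Z); split; last exact: gK.
    apply/(pencil_ofE HK Hdim _ aXY); rewrite -(kK X) -(kK Y).
    exact: (graph_line_transport kK (inverse_adj gK k_adj)).
exact: is_pencil_of.
Qed.

Lemma preimage_setE (K : unitRingType) (V : lmodType K) (k g : Gr V -> Gr V) (P : Gr V -> Prop) :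
  cancel k g -> cancel g k -> preimage_set k P = image_set g P.
Proof.
move=> kK gK; apply: functional_extensionality => X; apply: propositional_extensionality.
by split=> [hX|[Z [hZ <-]]]; [exists (k X); rewrite kK|rewrite /preimage_set gK].
Qed.

Theorem corollary5p1 (K : unitRingType) (V : lmodType K)
  (HK : forall x : K, x != 0 -> x \is a GRing.unit)
  (Hdim : dim_gt2 V)
  (HG : exists X : V -> Prop, inG X)
  (kappa : Gr V -> Gr V) (Hbij : bijective kappa) :
  (forall X Y : Gr V,
      adj (proj1_sig X) (proj1_sig Y) <-> adj (proj1_sig (kappa X)) (proj1_sig (kappa Y)))
  <->
  ((forall P : Gr V -> Prop, is_pencil P -> is_pencil (image_set kappa P)) /\
   (forall P : Gr V -> Prop, is_pencil P -> is_pencil (preimage_set kappa P))).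
Proof.
case: Hbij => g kK gK; split.
- move=> k_adj; split; first exact: (automorphism_image_pencil HK Hdim kK gK k_adj).
  move=> P hP; rewrite (preimage_setE P kK gK).
  exact: (automorphism_image_pencil HK Hdim gK kK (inverse_adj gK k_adj)).
- move=> [himg hpre] X Y; split=> h.
  + have [inX inY] := pencil_of_ends HK (Gr_subspace X) (Gr_subspace Y) h.
    apply: (pencil_adj HK (himg _ (is_pencil_of HK h))); [by exists X|by exists Y|].
    by move=> e; move: h; rewrite -(kK X) e kK; apply: adj_irrefl (Gr_subspace Y).
  + have [inX inY] := pencil_of_ends HK (Gr_subspace (kappa X)) (Gr_subspace (kappa Y)) h.
    apply: (pencil_adj HK (hpre _ (is_pencil_of HK h))) => // e.
    by move: h; rewrite e; apply: adj_irrefl (Gr_subspace _).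
Qed.
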